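(* Let $H$ be a bialgebra and $C$, $D$ left $H$-module coalgebras over a field $\Bbbk$. Let $M$ be an object of ${}^C_H\mathfrak{M}^D$ with left $H$-action $\bullet$. Then the functor $T_M:=(-)\mathbin{\square}_C M:\mathfrak{M}^C\to\mathfrak{M}^D$ becomes a lax left $\mathfrak{M}^H$-module functor with structure map $\xi^\bullet_{X,W}:X\otimes T_M(W)\to T_M(X\otimes W)$ ($X\in\mathfrak{M}^H$, $W\in\mathfrak{M}^C$) induced by the linear map $X\otimes(W\otimes M)\to(X\otimes W)\otimes M$, $x\otimes(w\otimes m)\mapsto(x_{(0)}\otimes w)\otimes(x_{(1)}\bullet m)$; in particular this map sends $X\otimes(W\mathbin{\square}_C M)$ into $(X\otimes W)\mathbin{\square}_C M$.
   Context: A left $H$-module coalgebra is a coalgebra $C$ with left $H$-action such that $\Delta(hc)=h_{(1)}c_{(1)}\otimes h_{(2)}c_{(2)}$, $\varepsilon(hc)=\varepsilon(h)\varepsilon(c)$. $\mathfrak{M}^C$ is the category of right $C$-comodules, a left module category over the monoidal category $\mathfrak{M}^H$ of right $H$-comodules ($x\otimes y\mapsto x_{(0)}\otimes y_{(0)}\otimes x_{(1)}y_{(1)}$) via $X\otimes W$ with coaction $x\otimes w\mapsto x_{(0)}\otimes w_{(0)}\otimes x_{(1)}w_{(1)}$. ${}^C_H\mathfrak{M}^D$ is the category of $C$-$D$-bicomodules $M$ with a left $H$-action satisfying $\rho^\ell(hm)=h_{(1)}m_{(-1)}\otimes h_{(2)}m_{(0)}$ and $\rho^r(hm)=h_{(1)}m_{(0)}\otimes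 h_{(2)}m_{(1)}$. $W\mathbin{\square}_C M=\ker(\rho_W\otimes\mathrm{id}_M-\mathrm{id}_W\otimes\rho^\ell_M)\subset W\otimes M$, a right $D$-comodule via $M$. A lax left $\mathfrak{M}^H$-module functor is a functor $F$ with natural, not necessarily invertible, $\xi_{X,W}:X\otimes F(W)\to F(X\otimes W)$ such that $\xi_{X\otimes Y,W}=\xi_{X,Y\otimes W}(\mathrm{id}_X\otimes\xi_{Y,W})$ and $\xi_{\Bbbk,W}=\mathrm{id}$. *)

(* An element of U (x) V is represented by a finite formal sum
   sum_i u_i (x) v_i, i.e. a list  s : seq (U * V).  Over a field k two such
   sums are equal in U (x) V iff they have the same value on every product
   functional f (x) g  (f, g linear functionals on U, V); the value is
       tp f g s = sum_i f(u_i) g(v_i).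
   Likewise for threefold/fourfold tensors (values on f (x) g (x) h (x) ...).
   A linear map  rho : U -> V (x) W  is represented by a function choosing a
   representative  rho u : seq (V * W)  of the image of every u.
   Tensor products are treated as strictly associative and k (x) V = V
   (the usual suppression of associators/unitors). *)
From HB Require Import structures.
From mathcomp Require Import all_boot all_order all_algebra.
Set Implicit Arguments.
Unset Strict Implicit.
Unset Printing Implicit Defensive.
Import GRing.Theory.
Local Open Scope ring_scope.

Section HopfDefs.
Variable K : fieldType.

Definition tp (U V : lmodType K) (f : {scalar U}) (g : {scalar V})
  (s : seq (U * V)) : K := \sum_(p <- s) f p.1 * g p.2.

Record coalgebra (C : lmodType K) (Delta : C -> seq (C * C))
    (eps : {scalar C}) : Prop := Coalgebra {
  coalg_linear : forall (f g : {scalar C}) (a : K) (c d : C),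
    tp f g (Delta (a *: c + d)) = a * tp f g (Delta c) + tp f g (Delta d);
  coalg_coassoc : forall (c : C) (f g h : {scalar C}),
    \sum_(p <- Delta c) tp f g (Delta p.1) * h p.2
    = \sum_(p <- Delta c) f p.1 * tp g h (Delta p.2);
  coalg_counitl : forall c : C, \sum_(p <- Delta c) eps p.1 *: p.2 = c;
  coalg_counitr : forall c : C, \sum_(p <- Delta c) eps p.2 *: p.1 = c }.

Record bialgebra (H : algType K) (Delta : H -> seq (H * H))
    (eps : {scalar H}) : Prop := Bialgebra {
  bialg_coalg : coalgebra Delta eps;
  bialg_comul_mul : forall (h k : H) (f g : {scalar H}),
    tp f g (Delta (h * k))
    = \sum_(p <- Delta h) \sum_(q <- Delta k) f (p.1 * q.1) * g (p.2 * q.2);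
  bialg_comul_one : forall f g : {scalar H}, tp f g (Delta 1) = f 1 * g 1;
  bialg_counit_mul : forall h k : H, eps (h * k) = eps h * eps k;
  bialg_counit_one : eps 1 = 1 }.

Record hmodule (H : algType K) (V : lmodType K) (act : H -> V -> V) : Prop :=
  HModule {
  hmod_linl : forall (a : K) (h k : H) (v : V),
    act (a *: h + k) v = a *: act h v + act k v;
  hmod_linr : forall (a : K) (h : H) (v w : V),
    act h (a *: v + w) = a *: act h v + act h w;
  hmod_one : forall v : V, act 1 v = v;
  hmod_mul : forall (h k : H) (v : V), act (h * k) v = act h (act k v) }.

(* left H-module coalgebra:  Delta(hc) = h1 c1 (x) h2 c2,
   eps(hc) = eps(h) eps(c). *)
Record module_coalgebra (H : algType K) (DeltaH : H -> seq (H * H))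
    (epsH : {scalar H}) (C : lmodType K) (DeltaC : C -> seq (C * C))
    (epsC : {scalar C}) (act : H -> C -> C) : Prop := ModuleCoalgebra {
  mc_coalg : coalgebra DeltaC epsC;
  mc_module : hmodule act;
  mc_comul : forall (h : H) (c : C) (f g : {scalar C}),
    tp f g (DeltaC (act h c))
    = \sum_(p <- DeltaH h) \sum_(q <- DeltaC c) f (act p.1 q.1) * g (act p.2 q.2);
  mc_counit : forall (h : H) (c : C), epsC (act h c) = epsH h * epsC c }.

Record rcomodule (C : lmodType K) (Delta : C -> seq (C * C))
    (eps : {scalar C}) (X : lmodType K) (rho : X -> seq (X * C)) : Prop :=
  RComodule {
  rc_linear : forall (f : {scalar X}) (g : {scalar C}) (a : K) (x y : X),
    tp f g (rho (a *: x + y)) = a * tp f g (rho x) + tp f g (rho y);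
  rc_coassoc : forall (x : X) (f : {scalar X}) (g h : {scalar C}),
    \sum_(p <- rho x) tp f g (rho p.1) * h p.2
    = \sum_(p <- rho x) f p.1 * tp g h (Delta p.2);
  rc_counit : forall x : X, \sum_(p <- rho x) eps p.2 *: p.1 = x }.

Record lcomodule (C : lmodType K) (Delta : C -> seq (C * C))
    (eps : {scalar C}) (M : lmodType K) (lam : M -> seq (C * M)) : Prop :=
  LComodule {
  lc_linear : forall (f : {scalar C}) (g : {scalar M}) (a : K) (x y : M),
    tp f g (lam (a *: x + y)) = a * tp f g (lam x) + tp f g (lam y);
  lc_coassoc : forall (m : M) (f g : {scalar C}) (h : {scalar M}),
    \sum_(p <- lam m) tp f g (Delta p.1) * h p.2
    = \sum_(p <- lam m) f p.1 * tp g h (lam p.2);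
  lc_counit : forall m : M, \sum_(p <- lam m) eps p.1 *: p.2 = m }.

(* object of  ^C_H M^D : a C-D-bicomodule M with a left H-action act s.t.
   lam(hm) = h1 m_(-1) (x) h2 m_(0),  rho(hm) = h1 m_(0) (x) h2 m_(1). *)
Record hbicomodule (H : algType K) (DeltaH : H -> seq (H * H))
    (C : lmodType K) (DeltaC : C -> seq (C * C)) (epsC : {scalar C})
    (actC : H -> C -> C)
    (D : lmodType K) (DeltaD : D -> seq (D * D)) (epsD : {scalar D})
    (actD : H -> D -> D)
    (M : lmodType K) (lam : M -> seq (C * M)) (rho : M -> seq (M * D))
    (act : H -> M -> M) : Prop := HBicomodule {
  hb_left : lcomodule DeltaC epsC lam;
  hb_right : rcomodule DeltaD epsD rho;
  hb_bicomod : forall (m : M) (f : {scalar C}) (g : {scalar M}) (h : {scalar D}),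
    \sum_(p <- rho m) tp f g (lam p.1) * h p.2
    = \sum_(p <- lam m) f p.1 * tp g h (rho p.2);
  hb_module : hmodule act;
  hb_left_act : forall (h : H) (m : M) (f : {scalar C}) (g : {scalar M}),
    tp f g (lam (act h m))
    = \sum_(p <- DeltaH h) \sum_(q <- lam m) f (actC p.1 q.1) * g (act p.2 q.2);
  hb_right_act : forall (h : H) (m : M) (f : {scalar M}) (g : {scalar D}),
    tp f g (rho (act h m))
    = \sum_(p <- DeltaH h) \sum_(q <- rho m) f (act p.1 q.1) * g (actD p.2 q.2) }.

(* t : seq (W * M) represents an element of the cotensor product
   W []_C M = ker(rho_W (x) id - id (x) lam) *)
Definition in_cotensor (C W M : lmodType K) (rhoW : W -> seq (W * C))
    (lam : M -> seq (C * M)) (t : seq (W * M)) : Prop :=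
  forall (f : {scalar W}) (g : {scalar C}) (h : {scalar M}),
    \sum_(p <- t) tp f g (rhoW p.1) * h p.2
    = \sum_(p <- t) f p.1 * tp g h (lam p.2).

Definition tens_coact (H C X W : Type) (actC : H -> C -> C)
    (rhoX : X -> seq (X * H)) (rhoW : W -> seq (W * C)) (xw : X * W)
    : seq ((X * W) * C) :=
  [seq ((q.1, r.1), actC q.2 r.2) | q <- rhoX xw.1, r <- rhoW xw.2].

Definition tensH_coact (H : algType K) (X Y : Type)
    (rhoX : X -> seq (X * H)) (rhoY : Y -> seq (Y * H)) (xy : X * Y)
    : seq ((X * Y) * H) :=
  [seq ((q.1, r.1), q.2 * r.2) | q <- rhoX xy.1, r <- rhoY xy.2].

(* u : seq ((X * W) * M) represents an element of the cotensor product
   (X (x) W) []_C M, X (x) W carrying the coaction tens_coact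
   (elements of (X (x) W) (x) C (x) M compared on f (x) g (x) h (x) k). *)
Definition in_cotensor2 (H C X W M : lmodType K) (actC : H -> C -> C)
    (rhoX : X -> seq (X * H)) (rhoW : W -> seq (W * C))
    (lam : M -> seq (C * M)) (u : seq ((X * W) * M)) : Prop :=
  forall (f : {scalar X}) (g : {scalar W}) (h : {scalar C}) (k : {scalar M}),
    \sum_(p <- u) (\sum_(q <- tens_coact actC rhoX rhoW p.1)
                      f q.1.1 * g q.1.2 * h q.2) * k p.2
    = \sum_(p <- u) f p.1.1 * g p.1.2 * tp h k (lam p.2).

Definition xi (H A B M : Type) (rhoA : A -> seq (A * H)) (act : H -> M -> M)
    (a : A) (t : seq (B * M)) : seq ((A * B) * M) :=
  [seq ((q.1, p.1), act q.2 p.2) | q <- rhoA a, p <- t].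

End HopfDefs.

From HB Require Import structures.
From mathcomp Require Import all_boot all_order all_algebra.
From mathcomp Require Import ring.
Import GRing.Theory.
Local Open Scope ring_scope.
Set Implicit Arguments.
Unset Strict Implicit.

(* Elements of tensor products are compared on product functionals, so the
   comodule axioms can be applied to expressions involving the H-action by
   testing them on functionals of the form h |-> k (h . v) (scalar_actl).
   The cotensor condition for xi (x (x) t) is then reduced to that of t: the
   C-coaction of x0 (x) w is x00 (x) w0 (x) x01 w1, coassociativity of X
   rewrites x00 (x) x01 (x) x1 as x0 (x) x1(1) (x) x1(2), and the
   compatibility lam (h m) = h1 m(-1) (x) h2 m(0) turns the other side into
   the cotensor condition for t tested on c |-> h (x1(1) c), m |-> k (x1(2) m).
   Colinearity over D is the same argument with rho in place of lam; the
   remaining properties come from the module axioms of the H-action. *)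

Definition scalar_of (K : fieldType) (U : lmodType K) (F : U -> K)
    (F_linear : linear_for *%R F) : {scalar U} :=
  HB.pack F (GRing.isLinear.Build K U K *%R F F_linear).

Lemma exchange_big_nested (R : Type) (idx : R) (op : Monoid.com_law idx)
    (A B C D : Type) (sA : seq A) (sB : seq B) (sC : A -> seq C) (sD : B -> seq D)
    (F : A -> B -> C -> D -> R) :
  \big[op/idx]_(a <- sA) \big[op/idx]_(b <- sB)
     \big[op/idx]_(c <- sC a) \big[op/idx]_(d <- sD b) F a b c d
  = \big[op/idx]_(b <- sB) \big[op/idx]_(d <- sD b)
     \big[op/idx]_(a <- sA) \big[op/idx]_(c <- sC a) F a b c d.
Proof.
under eq_bigr => a _ do under eq_bigr => b _ do rewrite exchange_big.
by rewrite exchange_big; apply: eq_bigr => b _; rewrite exchange_big.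
Qed.

Section ActionFunctionals.
Variables (K : fieldType) (H : algType K) (V : lmodType K) (act : H -> V -> V).
Hypothesis Hact : hmodule act.

Lemma scalar_act_linearl (k : {scalar V}) (v : V) :
  linear_for *%R (fun h => k (act h v)).
Proof. by move=> a h h'; rewrite /= (hmod_linl Hact) linearP. Qed.

Lemma scalar_act_linearr (k : {scalar V}) (h : H) :
  linear_for *%R (fun v => k (act h v)).
Proof. by move=> a v w; rewrite /= (hmod_linr Hact) linearP. Qed.

Definition scalar_actl k v : {scalar H} := scalar_of (scalar_act_linearl k v).
Definition scalar_actr k h : {scalar V} := scalar_of (scalar_act_linearr k h).

End ActionFunctionals.

Lemma rcomodule_coassocE (K : fieldType) (C X : lmodType K)
    (Delta : C -> seq (C * C)) (eps : {scalar C}) (rhoX : X -> seq (X * C))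
    (HX : rcomodule Delta eps rhoX) (x : X) (f : {scalar X}) (g h : {scalar C}) :
  \sum_(q <- rhoX x) \sum_(s <- rhoX q.1) f s.1 * g s.2 * h q.2
  = \sum_(q <- rhoX x) f q.1 * \sum_(s <- Delta q.2) g s.1 * h s.2.
Proof.
have := rc_coassoc HX x f g h; rewrite /tp => <-.
by apply: eq_bigr => q _; rewrite mulr_suml.
Qed.

Lemma in_cotensorE (K : fieldType) (C W M : lmodType K)
    (rhoW : W -> seq (W * C)) (lam : M -> seq (C * M)) (t : seq (W * M))
    (Ht : in_cotensor rhoW lam t) (g : {scalar W}) (h : {scalar C}) (k : {scalar M}) :
  \sum_(p <- t) \sum_(b <- rhoW p.1) g b.1 * h b.2 * k p.2
  = \sum_(p <- t) g p.1 * \sum_(c <- lam p.2) h c.1 * k c.2.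
Proof.
have := Ht g h k; rewrite /tp => <-.
by apply: eq_bigr => p _; rewrite mulr_suml.
Qed.

Section Xi.
Variables (K : fieldType) (H : algType K) (DeltaH : H -> seq (H * H)).
Variable epsH : {scalar H}.
Variables (C D M : lmodType K) (actC : H -> C -> C) (actD : H -> D -> D).
Variables (act : H -> M -> M) (lam : M -> seq (C * M)) (rho : M -> seq (M * D)).
Hypotheses (HactC : hmodule actC) (HactD : hmodule actD) (Hact : hmodule act).
Hypothesis lam_act : forall (h : H) (m : M) (f : {scalar C}) (g : {scalar M}),
  tp f g (lam (act h m))
  = \sum_(p <- DeltaH h) \sum_(q <- lam m) f (actC p.1 q.1) * g (act p.2 q.2).
Hypothesis rho_act : forall (h : H) (m : M) (f : {scalar M}) (g : {scalar D}),
  tp f g (rho (act h m))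
  = \sum_(p <- DeltaH h) \sum_(q <- rho m) f (act p.1 q.1) * g (actD p.2 q.2).

Lemma xi_in_cotensor (X W : lmodType K) (rhoX : X -> seq (X * H))
    (rhoW : W -> seq (W * C)) :
    rcomodule DeltaH epsH rhoX ->
  forall (x : X) (t : seq (W * M)), in_cotensor rhoW lam t ->
    in_cotensor2 actC rhoX rhoW lam (xi rhoX act x t).
Proof.
move=> HX x t Ht f g h k.
transitivity (\sum_(p <- t) \sum_(b <- rhoW p.1) \sum_(q <- rhoX x)
    \sum_(s <- DeltaH q.2) f q.1 * (g b.1 * h (actC s.1 b.2) * k (act s.2 p.2))).
  rewrite /xi /tens_coact big_allpairs_dep /=.
  under eq_bigr => q _ do under eq_bigr => p _ do
    rewrite big_allpairs_dep /= mulr_suml.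
  under eq_bigr => q _ do under eq_bigr => p _ do under eq_bigr => i _ do
    rewrite mulr_suml.
  rewrite exchange_big_nested; apply: eq_bigr => p _; apply: eq_bigr => b _.
  have := rcomodule_coassocE HX x f (scalar_actl HactC h b.2) (scalar_actl Hact k p.2).
  move=> /= coassoc.
  transitivity (g b.1 * \sum_(q <- rhoX x) \sum_(s <- rhoX q.1)
      f s.1 * h (actC s.2 b.2) * k (act q.2 p.2)).
    rewrite mulr_sumr; apply: eq_bigr => q _.
    by rewrite mulr_sumr; apply: eq_bigr => s _; ring.
  rewrite coassoc mulr_sumr; apply: eq_bigr => q _.
  by rewrite !mulr_sumr; apply: eq_bigr => s _; ring.
rewrite /xi big_allpairs_dep /=.
under eq_bigr => p _ do rewrite exchange_big.
rewrite exchange_big_nested; apply: eq_bigr => q _.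
under [RHS]eq_bigr => p _ do rewrite lam_act -mulrA.
under eq_bigr => s _ do under eq_bigr => p _ do rewrite -mulr_sumr.
under eq_bigr => s _ do rewrite -mulr_sumr.
rewrite -!mulr_sumr; congr (_ * _).
under [RHS]eq_bigr => p _ do rewrite mulr_sumr.
rewrite [RHS]exchange_big; apply: eq_bigr => s _.
exact: (in_cotensorE Ht g (scalar_actr HactC h s.1) (scalar_actr Hact k s.2)).
Qed.

Lemma xi_colinear (X W : lmodType K) (rhoX : X -> seq (X * H)) :
    rcomodule DeltaH epsH rhoX ->
  forall (x : X) (t : seq (W * M))
         (f : {scalar X}) (g : {scalar W}) (k : {scalar M}) (l : {scalar D}),
    \sum_(p <- xi rhoX act x t) f p.1.1 * g p.1.2 * tp k l (rho p.2)
    = \sum_(q <- rhoX x) \sum_(p <- t) \sum_(r <- rho p.2) \sum_(s <- rhoX q.1)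
        f s.1 * g p.1 * k (act s.2 r.1) * l (actD q.2 r.2).
Proof.
move=> HX x t f g k l; rewrite /xi big_allpairs_dep /=.
under eq_bigr => q _ do under eq_bigr => p _ do rewrite rho_act.
rewrite exchange_big [RHS]exchange_big; apply: eq_bigr => p _ /=.
rewrite [RHS]exchange_big /=.
transitivity (g p.1 * \sum_(r <- rho p.2) \sum_(q <- rhoX x)
    f q.1 * \sum_(s <- DeltaH q.2) k (act s.1 r.1) * l (actD s.2 r.2)).
  under eq_bigr => q _ do rewrite exchange_big mulr_sumr.
  rewrite exchange_big mulr_sumr; apply: eq_bigr => r _.
  by rewrite mulr_sumr; apply: eq_bigr => q _; ring.
rewrite mulr_sumr; apply: eq_bigr => r _.
have := rcomodule_coassocE HX x f (scalar_actl Hact k r.1) (scalar_actl HactD l r.2).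
move=> /= <-; rewrite mulr_sumr; apply: eq_bigr => q _.
by rewrite mulr_sumr; apply: eq_bigr => s _; ring.
Qed.

Lemma xi_natural_comodule (X X' W : lmodType K) (rhoX : X -> seq (X * H))
    (rhoX' : X' -> seq (X' * H)) (phi : {linear X -> X'}) :
    (forall (x : X) (f : {scalar X'}) (g : {scalar H}),
      tp f g (rhoX' (phi x)) = \sum_(q <- rhoX x) f (phi q.1) * g q.2) ->
  forall (x : X) (t : seq (W * M)) (f : {scalar X'}) (g : {scalar W}) (h : {scalar M}),
    \sum_(p <- xi rhoX' act (phi x) t) f p.1.1 * g p.1.2 * h p.2
    = \sum_(p <- xi rhoX act x t) f (phi p.1.1) * g p.1.2 * h p.2.
Proof.
move=> phi_colinear x t f g h; rewrite /xi !big_allpairs_dep /=.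
rewrite exchange_big [RHS]exchange_big /=; apply: eq_bigr => p _.
have := phi_colinear x f (scalar_actl Hact h p.2); rewrite /tp /= => colinear_at_x.
transitivity (g p.1 * \sum_(q <- rhoX' (phi x)) f q.1 * h (act q.2 p.2)).
  by rewrite mulr_sumr; apply: eq_bigr => q _; ring.
by rewrite colinear_at_x mulr_sumr; apply: eq_bigr => q _; ring.
Qed.

Lemma xi_natural_cotensor (X W W' : lmodType K) (rhoX : X -> seq (X * H))
    (psi : {linear W -> W'}) (x : X) (t : seq (W * M))
    (f : {scalar X}) (g : {scalar W'}) (h : {scalar M}) :
  \sum_(p <- xi rhoX act x [seq (psi p.1, p.2) | p <- t]) f p.1.1 * g p.1.2 * h p.2
  = \sum_(p <- xi rhoX act x t) f p.1.1 * g (psi p.1.2) * h p.2.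
Proof.
by rewrite /xi !big_allpairs_dep; apply: eq_bigr => q _; rewrite big_map.
Qed.

Lemma xi_tensor (X Y W : lmodType K) (rhoX : X -> seq (X * H))
    (rhoY : Y -> seq (Y * H)) (x : X) (y : Y) (t : seq (W * M))
    (f : {scalar X}) (g : {scalar Y}) (h : {scalar W}) (k : {scalar M}) :
  \sum_(p <- xi (tensH_coact rhoX rhoY) act (x, y) t)
     f p.1.1.1 * g p.1.1.2 * h p.1.2 * k p.2
  = \sum_(p <- xi rhoX act x (xi rhoY act y t))
     f p.1.1 * g p.1.2.1 * h p.1.2.2 * k p.2.
Proof.
rewrite /xi /tensH_coact !big_allpairs_dep; apply: eq_bigr => q _.
rewrite big_allpairs_dep; apply: eq_bigr => r _; apply: eq_bigr => p _ /=.
by rewrite (hmod_mul Hact).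
Qed.

Lemma xi_unit (W : lmodType K) (a : K) (t : seq (W * M))
    (g : {scalar W}) (h : {scalar M}) :
  \sum_(p <- xi (fun b : K => [:: (b, 1 : H)]) act a t) g (p.1.1 *: p.1.2) * h p.2
  = \sum_(p <- t) g (a *: p.1) * h p.2.
Proof.
rewrite /xi big_allpairs_dep big_seq1.
by apply: eq_bigr => p _; rewrite (hmod_one Hact).
Qed.

End Xi.

Theorem lemma3p1
  (K : fieldType) (H : algType K)
  (DeltaH : H -> seq (H * H)) (epsH : {scalar H})
  (HbiH : bialgebra DeltaH epsH)
  (C : lmodType K) (DeltaC : C -> seq (C * C)) (epsC : {scalar C})
  (actC : H -> C -> C)
  (HC : module_coalgebra DeltaH epsH DeltaC epsC actC)
  (D : lmodType K) (DeltaD : D -> seq (D * D)) (epsD : {scalar D})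
  (actD : H -> D -> D)
  (HD : module_coalgebra DeltaH epsH DeltaD epsD actD)
  (M : lmodType K) (lam : M -> seq (C * M)) (rho : M -> seq (M * D))
  (act : H -> M -> M)
  (HM : hbicomodule DeltaH DeltaC epsC actC DeltaD epsD actD lam rho act) :
  (* (1) *)
  (forall (X W : lmodType K) (rhoX : X -> seq (X * H)) (rhoW : W -> seq (W * C)),
     rcomodule DeltaH epsH rhoX -> rcomodule DeltaC epsC rhoW ->
     forall (x : X) (t : seq (W * M)), in_cotensor rhoW lam t ->
       in_cotensor2 actC rhoX rhoW lam (xi rhoX act x t)) /\
  (* (2) *)
  (forall (X W : lmodType K) (rhoX : X -> seq (X * H)) (rhoW : W -> seq (W * C)),
     rcomodule DeltaH epsH rhoX -> rcomodule DeltaC epsC rhoW ->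
     forall (x : X) (t : seq (W * M)), in_cotensor rhoW lam t ->
     forall (f : {scalar X}) (g : {scalar W}) (k : {scalar M}) (l : {scalar D}),
       \sum_(p <- xi rhoX act x t) f p.1.1 * g p.1.2 * tp k l (rho p.2)
       = \sum_(q <- rhoX x) \sum_(p <- t) \sum_(r <- rho p.2) \sum_(s <- rhoX q.1)
           f s.1 * g p.1 * k (act s.2 r.1) * l (actD q.2 r.2)) /\
  (* (3) *)
  (forall (X X' W : lmodType K) (rhoX : X -> seq (X * H))
          (rhoX' : X' -> seq (X' * H)) (rhoW : W -> seq (W * C))
          (phi : {linear X -> X'}),
     rcomodule DeltaH epsH rhoX -> rcomodule DeltaH epsH rhoX' ->
     rcomodule DeltaC epsC rhoW ->
     (forall (x : X) (f : {scalar X'}) (g : {scalar H}),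
        tp f g (rhoX' (phi x)) = \sum_(q <- rhoX x) f (phi q.1) * g q.2) ->
     forall (x : X) (t : seq (W * M)), in_cotensor rhoW lam t ->
     forall (f : {scalar X'}) (g : {scalar W}) (h : {scalar M}),
       \sum_(p <- xi rhoX' act (phi x) t) f p.1.1 * g p.1.2 * h p.2
       = \sum_(p <- xi rhoX act x t) f (phi p.1.1) * g p.1.2 * h p.2) /\
  (* (4) *)
  (forall (X W W' : lmodType K) (rhoX : X -> seq (X * H))
          (rhoW : W -> seq (W * C)) (rhoW' : W' -> seq (W' * C))
          (psi : {linear W -> W'}),
     rcomodule DeltaH epsH rhoX -> rcomodule DeltaC epsC rhoW ->
     rcomodule DeltaC epsC rhoW' ->
     (forall (w : W) (f : {scalar W'}) (g : {scalar C}),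
        tp f g (rhoW' (psi w)) = \sum_(q <- rhoW w) f (psi q.1) * g q.2) ->
     forall (x : X) (t : seq (W * M)), in_cotensor rhoW lam t ->
     forall (f : {scalar X}) (g : {scalar W'}) (h : {scalar M}),
       \sum_(p <- xi rhoX act x [seq (psi p.1, p.2) | p <- t])
          f p.1.1 * g p.1.2 * h p.2
       = \sum_(p <- xi rhoX act x t) f p.1.1 * g (psi p.1.2) * h p.2) /\
  (* (5) *)
  (forall (X Y W : lmodType K) (rhoX : X -> seq (X * H))
          (rhoY : Y -> seq (Y * H)) (rhoW : W -> seq (W * C)),
     rcomodule DeltaH epsH rhoX -> rcomodule DeltaH epsH rhoY ->
     rcomodule DeltaC epsC rhoW ->
     forall (x : X) (y : Y) (t : seq (W * M)), in_cotensor rhoW lam t ->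
     forall (f : {scalar X}) (g : {scalar Y}) (h : {scalar W}) (k : {scalar M}),
       \sum_(p <- xi (tensH_coact rhoX rhoY) act (x, y) t)
          f p.1.1.1 * g p.1.1.2 * h p.1.2 * k p.2
       = \sum_(p <- xi rhoX act x (xi rhoY act y t))
          f p.1.1 * g p.1.2.1 * h p.1.2.2 * k p.2) /\
  (* (6) *)
  (forall (W : lmodType K) (rhoW : W -> seq (W * C)),
     rcomodule DeltaC epsC rhoW ->
     forall (a : K) (t : seq (W * M)), in_cotensor rhoW lam t ->
     forall (g : {scalar W}) (h : {scalar M}),
       \sum_(p <- xi (fun b : K => [:: (b, 1 : H)]) act a t)
          g (p.1.1 *: p.1.2) * h p.2
       = \sum_(p <- t) g (a *: p.1) * h p.2).
Proof.
have Hact := hb_module HM; have HactC := mc_module HC; have HactD := mc_module HD.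
split; [| split; [| split; [| split; [| split]]]].
- move=> X W rhoX rhoW HX _.
  exact: (xi_in_cotensor HactC Hact (hb_left_act HM) HX).
- move=> X W rhoX rhoW HX _ x t _.
  exact: (xi_colinear HactD Hact (hb_right_act HM) HX).
- move=> X X' W rhoX rhoX' rhoW phi _ _ _ phi_colinear x t _.
  exact: (xi_natural_comodule Hact phi_colinear).
- by move=> X W W' rhoX rhoW rhoW' psi _ _ _ _ x t _; apply: xi_natural_cotensor.
- by move=> X Y W rhoX rhoY rhoW _ _ _ x y t _; apply: xi_tensor.
- by move=> W rhoW _ a t _; apply: xi_unit.
Qed.
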